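(* Let $q$ be a prime power and $n\ge1$. For $i=1,2$, let $\mathcal{C}_i$ be a $[2n,n,d_i]_q$ linear code with generator matrix $G_i=(I_n\ \ f_i(A_i))$, where $f_i(x)\in\mathbb{F}_q[x]$ and $A_i$ is an $n\times n$ Toeplitz matrix over $\mathbb{F}_q$. Assume that both $\mathcal{C}_1$ and $\mathcal{C}_2$ are Euclidean (resp. Hermitian, with $q$ an even power of a prime) LCD codes. Then for every integer $s\ge1$ there exists a $[4sn,2sn,\min\{d_1,d_2\}]_q$ code that is Euclidean (resp. Hermitian) formally self-dual and Euclidean (resp. Hermitian) LCD.
   Context: A Toeplitz matrix is a square matrix whose diagonals parallel to the main diagonal each have constant entries. Euclidean inner product $\sum_i x_iy_i$; for $q=p^h$ with $h$ even, Hermitian inner product $\sum_i x_iy_i^{\sqrt q}$. A code $\mathcal{C}$ is Euclidean (resp. Hermitian) LCD if $\mathcal{C}\cap\mathcal{C}^{\perp_E}=\{0\}$ (resp. $\mathcal{C}\cap\mathcal{C}^{\perp_H}=\{0\}$), and formally self-dual if it has the same weight distribution as its dual with respect to the given inner product. *)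

From mathcomp Require Import all_boot all_order all_algebra.
Set Implicit Arguments. Unset Strict Implicit. Unset Printing Implicit Defensive.
Import GRing.Theory.
Local Open Scope ring_scope.

Section Codes.
Variable F : finFieldType.

Definition poly_mx (n : nat) (f : {poly F}) (A : 'M[F]_n) : 'M[F]_n :=
  \sum_(i < size f) f`_i *: A ^+ i.

(* Toeplitz: constant along each diagonal, i.e. A i j depends only on j - i. *)
Definition toeplitz (n : nat) (A : 'M[F]_n) : Prop :=
  forall i j k l : 'I_n, (i + l = j + k)%N -> A i j = A k l.

Definition code_of (k N : nat) (G : 'M[F]_(k, N)) : {set 'rV[F]_N} :=
  [set v : 'rV[F]_N | (v <= G)%MS].

Definition wt (N : nat) (v : 'rV[F]_N) : nat := #|[set i : 'I_N | v 0 i != 0]|.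

Definition min_dist (N : nat) (C : {set 'rV[F]_N}) (d : nat) : Prop :=
  (exists2 c, c \in C & (c != 0) && (wt c == d)) /\
  (forall c, c \in C -> c != 0 -> (d <= wt c)%N).

Definition ipE (N : nat) (x y : 'rV[F]_N) : F := \sum_i x 0 i * y 0 i.
(* Hermitian inner product, with r = sqrt q. *)
Definition ipH (r N : nat) (x y : 'rV[F]_N) : F := \sum_i x 0 i * (y 0 i) ^+ r.

Definition dual (N : nat) (b : 'rV[F]_N -> 'rV[F]_N -> F) (C : {set 'rV[F]_N})
  : {set 'rV[F]_N} := [set y | [forall x in C, b x y == 0]].

Definition LCD (N : nat) (b : 'rV[F]_N -> 'rV[F]_N -> F) (C : {set 'rV[F]_N}) : Prop :=
  C :&: dual b C = [set 0].

Definition wdist (N : nat) (C : {set 'rV[F]_N}) (w : nat) : nat :=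
  #|[set v in C | wt v == w]|.

Definition formally_self_dual (N : nat) (b : 'rV[F]_N -> 'rV[F]_N -> F)
  (C : {set 'rV[F]_N}) : Prop :=
  forall w, wdist C w = wdist (dual b C) w.

End Codes.

From mathcomp Require Import all_boot all_order all_algebra.
From mathcomp Require Import finfield zify.
Set Implicit Arguments. Unset Strict Implicit. Unset Printing Implicit Defensive.
Import GRing.Theory.
Local Open Scope ring_scope.

(* Let J be the exchange matrix.  If A is Toeplitz then A^T = J A J, hence
   B^T = J B J for B = f(A).  A vector (l, r) lies in the code generated by
   (I | B) iff r = l B, and (l', r') lies in its dual iff l' = - r' B^T; so the
   weight-preserving bijection (l, r) |-> (- r J, l J) maps the code onto its
   Euclidean dual, and composing with the coordinatewise conjugation
   t |-> t^sqrt(q) maps it onto its Hermitian dual.  Hence the [2n, n] code is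
   formally self-dual.  Direct sums preserve formal self-duality, the LCD
   property and the minimum distance (taking the minimum), so the direct sum
   of s copies of C1 (+) C2 is the required [4sn, 2sn, min(d1, d2)] code. *)

Section Weights.
Variable F : finFieldType.

Lemma wtE N (v : 'rV[F]_N) : wt v = \sum_(i < N) (v 0 i != 0 : nat).
Proof.
rewrite /wt -sum1_card big_mkcond /=; apply: eq_bigr => i _.
by rewrite inE; case: (_ != _).
Qed.

Lemma wt0 N : wt (0 : 'rV[F]_N) = 0%N.
Proof. by rewrite wtE big1 // => i _; rewrite mxE eqxx. Qed.

Lemma wt_row_mx N1 N2 (a : 'rV[F]_N1) (b : 'rV[F]_N2) :
  wt (row_mx a b) = (wt a + wt b)%N.
Proof.
rewrite !wtE big_split_ord; congr (_ + _)%N; apply: eq_bigr => i _.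
  by rewrite row_mxEl.
by rewrite row_mxEr.
Qed.

Lemma wt_split N1 N2 (v : 'rV[F]_(N1 + N2)) :
  wt v = (wt (lsubmx v) + wt (rsubmx v))%N.
Proof. by rewrite -wt_row_mx hsubmxK. Qed.

Lemma wtN N (v : 'rV[F]_N) : wt (- v) = wt v.
Proof. by rewrite !wtE; apply: eq_bigr => i _; rewrite mxE oppr_eq0. Qed.

Lemma wt_map_mx (phi : F -> F) N (v : 'rV[F]_N) :
  (forall t, (phi t == 0) = (t == 0)) -> wt (map_mx phi v) = wt v.
Proof. by move=> phi_eq0; rewrite !wtE; apply: eq_bigr => i _; rewrite mxE phi_eq0. Qed.

End Weights.

Section ExchangeMatrix.
Variable F : finFieldType.

Definition exchange_mx n : 'M[F]_n := \matrix_(i, j) ((j == rev_ord i)%:R).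

Lemma mulmx_exchange m n (x : 'M[F]_(m, n)) i j :
  (x *m exchange_mx n) i j = x i (rev_ord j).
Proof.
rewrite mxE (bigD1 (rev_ord j)) //= mxE rev_ordK eqxx mulr1 big1 ?addr0 //.
move=> k hk; rewrite mxE; case: eqP => [e|]; last by rewrite mulr0.
by case/eqP: hk; rewrite e rev_ordK.
Qed.

Lemma exchange_mulmx m n (x : 'M[F]_(n, m)) i j :
  (exchange_mx n *m x) i j = x (rev_ord i) j.
Proof.
rewrite mxE (bigD1 (rev_ord i)) //= mxE eqxx mul1r big1 ?addr0 //.
by move=> k hk; rewrite mxE (negbTE hk) mul0r.
Qed.

Lemma exchange_mx_sqr n : exchange_mx n *m exchange_mx n = 1%:M.
Proof. by apply/matrixP => i j; rewrite exchange_mulmx !mxE rev_ordK eq_sym. Qed.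

Lemma mulmx_exchangeK m n (x : 'M[F]_(m, n)) :
  x *m exchange_mx n *m exchange_mx n = x.
Proof. by rewrite -mulmxA exchange_mx_sqr mulmx1. Qed.

Lemma wt_mulmx_exchange n (x : 'rV[F]_n) : wt (x *m exchange_mx n) = wt x.
Proof.
rewrite /wt -[RHS](card_preimset _ (@rev_ord_inj n)).
by apply: eq_card => i; rewrite !inE mulmx_exchange.
Qed.

Lemma toeplitz_trmx n (A : 'M[F]_n) :
  toeplitz A -> A^T = exchange_mx n *m A *m exchange_mx n.
Proof.
move=> tA; apply/matrixP => i j; rewrite mulmx_exchange exchange_mulmx mxE.
by symmetry; apply: tA => /=; have := ltn_ord i; have := ltn_ord j; lia.
Qed.

Lemma trmxX n (A : 'M[F]_n) i : (A ^+ i)^T = A^T ^+ i.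
Proof.
elim: i => [|i IH]; first by rewrite !expr0 -idmxE tr_scalar_mx.
by rewrite exprS exprSr -mulmxE trmx_mul IH mulmxE.
Qed.

Lemma exchange_conjX n (A : 'M[F]_n) i :
  (exchange_mx n *m A *m exchange_mx n) ^+ i
    = exchange_mx n *m A ^+ i *m exchange_mx n.
Proof.
elim: i => [|i IH]; first by rewrite !expr0 -idmxE mulmx1 exchange_mx_sqr.
by rewrite exprSr IH exprSr -!mulmxE !mulmxA mulmx_exchangeK.
Qed.

Lemma trmx_poly_mx n f (A : 'M[F]_n) : (poly_mx f A)^T = poly_mx f A^T.
Proof.
rewrite /poly_mx raddf_sum; apply: eq_bigr => i _.
by rewrite -trmxX; apply/matrixP => a b; rewrite !mxE.
Qed.

Lemma poly_mx_exchange_conj n f (A : 'M[F]_n) :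
  poly_mx f (exchange_mx n *m A *m exchange_mx n)
    = exchange_mx n *m poly_mx f A *m exchange_mx n.
Proof.
rewrite /poly_mx mulmx_sumr mulmx_suml; apply: eq_bigr => i _.
by rewrite exchange_conjX scalemxAl scalemxAr.
Qed.

Lemma toeplitz_trmx_poly_mx n f (A : 'M[F]_n) : toeplitz A ->
  (poly_mx f A)^T = exchange_mx n *m poly_mx f A *m exchange_mx n.
Proof. by move=> tA; rewrite trmx_poly_mx toeplitz_trmx // poly_mx_exchange_conj. Qed.

End ExchangeMatrix.

Section Codes.
Variable F : finFieldType.

Lemma mem0_code k N (G : 'M[F]_(k, N)) : 0 \in code_of G.
Proof. by rewrite inE sub0mx. Qed.

Lemma code_systematic n (B : 'M[F]_n) v :
  (v \in code_of (row_mx 1%:M B)) = (rsubmx v == lsubmx v *m B).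
Proof.
rewrite inE; apply/submxP/eqP => [[u ->]|h].
  by rewrite mul_mx_row row_mxKl row_mxKr mulmx1.
by exists (lsubmx v); rewrite mul_mx_row mulmx1 -h hsubmxK.
Qed.

Lemma rank_systematic n (B : 'M[F]_n) : \rank (row_mx 1%:M B) = n.
Proof.
apply/eqP; rewrite eqn_leq rank_leq_row /=.
have := mxrankM_maxl (row_mx 1%:M B) (col_mx 1%:M 0).
by rewrite mul_row_col mulmx0 addr0 mulmx1 mxrank1.
Qed.

Lemma dualE_code k N (G : 'M[F]_(k, N)) z :
  (z \in dual (@ipE F N) (code_of G)) = (G *m z^T == 0).
Proof.
rewrite inE; apply/forallP/eqP => [h|h x].
  apply/matrixP => i j; rewrite (ord1 j) [RHS]mxE.
  have := h (row i G); rewrite inE row_sub /= => /eqP <-.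
  by rewrite mxE /ipE; apply: eq_bigr => l _; rewrite !mxE.
apply/implyP; rewrite inE => /submxP [u ->]; apply/eqP.
have -> : ipE (u *m G) z = (u *m G *m z^T) 0 0.
  by rewrite [RHS]mxE; apply: eq_bigr => i _; rewrite [z^T _ _]mxE.
by rewrite -mulmxA h mulmx0 mxE.
Qed.

Lemma dualE_systematic n (B : 'M[F]_n) z :
  (z \in dual (@ipE F _) (code_of (row_mx 1%:M B)))
    = (lsubmx z == - (rsubmx z *m B^T)).
Proof.
rewrite dualE_code -{1}[z]hsubmxK tr_row_mx mul_row_col mul1mx addr_eq0.
by rewrite -(inj_eq (@trmx_inj _ _ _)) linearN /= trmx_mul trmxK.
Qed.

Lemma code_block k1 k2 N1 N2 (G1 : 'M[F]_(k1, N1)) (G2 : 'M[F]_(k2, N2)) v :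
  (v \in code_of (block_mx G1 0 0 G2)) =
  (lsubmx v \in code_of G1) && (rsubmx v \in code_of G2).
Proof.
rewrite !inE; apply/submxP/andP => [[u ->]|[/submxP[u1 h1] /submxP[u2 h2]]].
  rewrite -[u]hsubmxK mul_row_block !mulmx0 addr0 add0r row_mxKl row_mxKr.
  by rewrite !submxMl.
exists (row_mx u1 u2).
by rewrite mul_row_block !mulmx0 addr0 add0r -h1 -h2 hsubmxK.
Qed.

Lemma min_dist_block k1 k2 N1 N2 (G1 : 'M[F]_(k1, N1)) (G2 : 'M[F]_(k2, N2))
    d1 d2 :
  min_dist (code_of G1) d1 -> min_dist (code_of G2) d2 ->
  min_dist (code_of (block_mx G1 0 0 G2)) (minn d1 d2).
Proof.
move=> [[c1 C1c1 /andP[nz1 /eqP wt1]] lb1] [[c2 C2c2 /andP[nz2 /eqP wt2]] lb2].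
split.
  case: leqP => _.
    exists (row_mx c1 0); first by rewrite code_block row_mxKl row_mxKr C1c1 mem0_code.
    by rewrite row_mx_eq0 eqxx andbT nz1 wt_row_mx wt0 addn0 wt1 eqxx.
  exists (row_mx 0 c2); first by rewrite code_block row_mxKl row_mxKr C2c2 mem0_code.
  by rewrite row_mx_eq0 eqxx nz2 wt_row_mx wt0 wt2 eqxx.
move=> c; rewrite code_block wt_split => /andP[C1l C2r] nz.
have [l0|nzl] := eqVneq (lsubmx c) 0.
  have nzr : rsubmx c != 0.
    by apply: contra nz => /eqP r0; rewrite -[c]hsubmxK l0 r0 row_mx0.
  by rewrite geq_min (leq_trans (lb2 _ C2r nzr)) ?leq_addl ?orbT.
by rewrite geq_min (leq_trans (lb1 _ C1l nzl)) ?leq_addr.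
Qed.

End Codes.

Section TwistedForm.
Variable F : finFieldType.
Variable phi : F -> F.
Hypothesis phiK : involutive phi.
Hypothesis phi0 : phi 0 = 0.

(* phi = id gives ipE, phi = (t |-> t ^+ r) gives ipH r, both by conversion. *)
Definition ipphi N (x y : 'rV[F]_N) : F := \sum_i x 0 i * phi (y 0 i).

Lemma phi_eq0 t : (phi t == 0) = (t == 0).
Proof. by apply/eqP/eqP => [h|->]; [rewrite -(phiK t) h phi0 | exact: phi0]. Qed.

Lemma map_mx_phiK m n : involutive (@map_mx _ _ phi m n).
Proof. by move=> z; apply/matrixP => i j; rewrite !mxE phiK. Qed.

Lemma dual_phi_map_mx N (C : {set 'rV[F]_N}) z :
  (z \in dual (@ipphi N) C) = (map_mx phi z \in dual (@ipE F N) C).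
Proof.
rewrite !inE; apply: eq_forallb => x; congr (_ ==> (_ == 0)).
by apply: eq_bigr => i _; rewrite mxE.
Qed.

Lemma ipphi_split N1 N2 (x z : 'rV[F]_(N1 + N2)) :
  ipphi x z = ipphi (lsubmx x) (lsubmx z) + ipphi (rsubmx x) (rsubmx z).
Proof.
by rewrite /ipphi big_split_ord; congr (_ + _); apply: eq_bigr => i _; rewrite !mxE.
Qed.

Lemma ipphi0 N (z : 'rV[F]_N) : ipphi 0 z = 0.
Proof. by rewrite /ipphi big1 // => i _; rewrite mxE mul0r. Qed.

Lemma dual_block k1 k2 N1 N2 (G1 : 'M[F]_(k1, N1)) (G2 : 'M[F]_(k2, N2)) z :
  (z \in dual (@ipphi _) (code_of (block_mx G1 0 0 G2))) =
  (lsubmx z \in dual (@ipphi _) (code_of G1)) &&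
  (rsubmx z \in dual (@ipphi _) (code_of G2)).
Proof.
rewrite !inE; apply/forallP/andP => [h|[/forallP h1 /forallP h2] x].
  split; apply/forallP => a; apply/implyP => Ca.
    have := h (row_mx a 0); rewrite code_block row_mxKl row_mxKr Ca mem0_code.
    by rewrite ipphi_split row_mxKl row_mxKr ipphi0 addr0.
  have := h (row_mx 0 a); rewrite code_block row_mxKl row_mxKr Ca mem0_code.
  by rewrite ipphi_split row_mxKl row_mxKr ipphi0 add0r.
apply/implyP; rewrite code_block ipphi_split => /andP[Cl Cr].
by rewrite (eqP (implyP (h1 _) Cl)) (eqP (implyP (h2 _) Cr)) addr0.
Qed.

Lemma LCD_block k1 k2 N1 N2 (G1 : 'M[F]_(k1, N1)) (G2 : 'M[F]_(k2, N2)) :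
  LCD (@ipphi _) (code_of G1) -> LCD (@ipphi _) (code_of G2) ->
  LCD (@ipphi _) (code_of (block_mx G1 0 0 G2)).
Proof.
move=> /setP L1 /setP L2; apply/setP => v.
rewrite in_setI in_set1 code_block dual_block andbACA.
move: (L1 (lsubmx v)) (L2 (rsubmx v)); rewrite !in_setI !in_set1 => -> ->.
by rewrite -row_mx_eq0 hsubmxK.
Qed.

(* An injection of the finite space is a bijection, so such a sigma matches
   the words of C weight for weight with those of its dual. *)
Definition fsd_pairing N (C : {set 'rV[F]_N}) :=
  exists sigma : 'rV[F]_N -> 'rV[F]_N,
    [/\ injective sigma, forall v, wt (sigma v) = wt v
      & forall v, (sigma v \in dual (@ipphi N) C) = (v \in C)].

Lemma fsd_pairing_formally_self_dual N (C : {set 'rV[F]_N}) :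
  fsd_pairing C -> formally_self_dual (@ipphi N) C.
Proof.
move=> [sigma [sigma_inj wt_sigma dual_sigma]] w.
rewrite /wdist -[RHS](card_preimset _ sigma_inj); apply: eq_card => v.
by move: (dual_sigma v) (wt_sigma v); rewrite !inE => -> ->.
Qed.

Lemma fsd_pairing_block k1 k2 N1 N2 (G1 : 'M[F]_(k1, N1)) (G2 : 'M[F]_(k2, N2)) :
  fsd_pairing (code_of G1) -> fsd_pairing (code_of G2) ->
  fsd_pairing (code_of (block_mx G1 0 0 G2)).
Proof.
move=> [s1 [inj1 wt1 dual1]] [s2 [inj2 wt2 dual2]].
exists (fun v => row_mx (s1 (lsubmx v)) (s2 (rsubmx v))); split.
- move=> v w /eq_row_mx [/inj1 e1 /inj2 e2].
  by rewrite -[v]hsubmxK -[w]hsubmxK e1 e2.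
- by move=> v; rewrite wt_row_mx wt1 wt2 [RHS]wt_split.
- by move=> v; rewrite dual_block row_mxKl row_mxKr dual1 dual2 code_block.
Qed.

Definition exchange_swap n (v : 'rV[F]_(n + n)) : 'rV[F]_(n + n) :=
  row_mx (- (rsubmx v *m exchange_mx F n)) (lsubmx v *m exchange_mx F n).

Lemma exchange_swap_inj n : injective (@exchange_swap n).
Proof.
move=> v w /eq_row_mx [/oppr_inj er el].
rewrite -[v]hsubmxK -[w]hsubmxK.
by rewrite -[lsubmx v]mulmx_exchangeK el -[rsubmx v]mulmx_exchangeK er !mulmx_exchangeK.
Qed.

Lemma fsd_pairing_toeplitz n f (A : 'M[F]_n) : toeplitz A ->
  fsd_pairing (code_of (row_mx 1%:M (poly_mx f A))).
Proof.
move=> tA; set B := poly_mx f A; set J := exchange_mx F n.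
have BT : B^T = J *m B *m J by exact: toeplitz_trmx_poly_mx.
exists (fun v => map_mx phi (exchange_swap v)); split.
- exact: inj_comp (can_inj (@map_mx_phiK _ _)) (@exchange_swap_inj n).
- move=> v; rewrite wt_map_mx; last exact: phi_eq0.
  rewrite /exchange_swap wt_row_mx wtN !wt_mulmx_exchange.
  by rewrite [RHS]wt_split addnC.
- move=> v; rewrite dual_phi_map_mx map_mx_phiK dualE_systematic code_systematic.
  rewrite row_mxKl row_mxKr BT eqr_opp !mulmxA -(mulmxA (lsubmx v)) exchange_mx_sqr.
  rewrite mulmx1; apply/eqP/eqP => [/(congr1 (mulmx^~ J))|->] //.
  by rewrite !mulmx_exchangeK.
Qed.

Definition fsd_LCD_code d k N := exists G : 'M[F]_(k, N),
  [/\ \rank G = k, min_dist (code_of G) d, fsd_pairing (code_of G)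
    & LCD (@ipphi N) (code_of G)].

Lemma fsd_LCD_code_toeplitz n f (A : 'M[F]_n) d : toeplitz A ->
  let G := row_mx 1%:M (poly_mx f A) in
  min_dist (code_of G) d -> LCD (@ipphi _) (code_of G) ->
  fsd_LCD_code d n (n + n).
Proof.
move=> tA G md L; exists G; split => //.
  exact: rank_systematic.
exact: fsd_pairing_toeplitz.
Qed.

Lemma fsd_LCD_code_sum d1 d2 k1 k2 N1 N2 :
  fsd_LCD_code d1 k1 N1 -> fsd_LCD_code d2 k2 N2 ->
  fsd_LCD_code (minn d1 d2) (k1 + k2) (N1 + N2).
Proof.
move=> [G1 [r1 md1 p1 L1]] [G2 [r2 md2 p2 L2]].
exists (block_mx G1 0 0 G2); split.
- by rewrite rank_diag_block_mx r1 r2.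
- exact: min_dist_block.
- exact: fsd_pairing_block.
- exact: LCD_block.
Qed.

Lemma fsd_LCD_code_copies d k N m : fsd_LCD_code d k N ->
  fsd_LCD_code d (m.+1 * k) (m.+1 * N).
Proof.
move=> c; elim: m => [|m IH]; first by rewrite !mul1n.
by rewrite mulSn (mulSn m.+1) -{1}(minnn d); apply: fsd_LCD_code_sum.
Qed.

Lemma fsd_LCD_toeplitz_sum n f1 f2 (A1 A2 : 'M[F]_n) d1 d2 :
  toeplitz A1 -> toeplitz A2 ->
  let G1 := row_mx 1%:M (poly_mx f1 A1) in
  let G2 := row_mx 1%:M (poly_mx f2 A2) in
  min_dist (code_of G1) d1 -> min_dist (code_of G2) d2 ->
  LCD (@ipphi _) (code_of G1) -> LCD (@ipphi _) (code_of G2) ->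
  forall s, (0 < s)%N ->
  exists G : 'M[F]_(2 * s * n, 4 * s * n),
    [/\ \rank G = (2 * s * n)%N, min_dist (code_of G) (minn d1 d2),
        formally_self_dual (@ipphi _) (code_of G) & LCD (@ipphi _) (code_of G)].
Proof.
move=> tA1 tA2 G1 G2 md1 md2 L1 L2 [//|s] _.
have C12 := fsd_LCD_code_sum (fsd_LCD_code_toeplitz tA1 md1 L1)
                             (fsd_LCD_code_toeplitz tA2 md2 L2).
have [G [rG mdG pG LG]] := fsd_LCD_code_copies s C12.
have -> : (2 * s.+1 * n = s.+1 * (n + n))%N by lia.
have -> : (4 * s.+1 * n = s.+1 * ((n + n) + (n + n)))%N by lia.
by exists G; split=> //; apply: fsd_pairing_formally_self_dual.
Qed.

End TwistedForm.

Lemma expr_sqrt_card_involutive (F : finFieldType) r :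
  (r * r)%N = #|F| -> involutive (fun t : F => t ^+ r).
Proof. by move=> rr t; rewrite -exprM rr expf_card. Qed.

Lemma expr_sqrt_card0 (F : finFieldType) r :
  (r * r)%N = #|F| -> (0 : F) ^+ r = 0.
Proof.
move=> rr; rewrite expr0n; case: r rr => // /esym/eqP.
by rewrite muln0 -leqn0 leqNgt; case/card_gt0P; exists 0.
Qed.

Theorem theorem5 (F : finFieldType) (n : nat) (f1 f2 : {poly F})
  (A1 A2 : 'M[F]_n) (d1 d2 : nat) :
  (0 < n)%N -> toeplitz A1 -> toeplitz A2 ->
  let G1 := row_mx 1%:M (poly_mx f1 A1) in
  let G2 := row_mx 1%:M (poly_mx f2 A2) in
  min_dist (code_of G1) d1 -> min_dist (code_of G2) d2 ->
  (* Euclidean case *)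
  ((LCD (@ipE F _) (code_of G1) -> LCD (@ipE F _) (code_of G2) ->
    forall s : nat, (0 < s)%N ->
    exists G : 'M[F]_(2 * s * n, 4 * s * n),
      [/\ \rank G = (2 * s * n)%N, min_dist (code_of G) (minn d1 d2),
          formally_self_dual (@ipE F _) (code_of G) & LCD (@ipE F _) (code_of G)])
  /\
  (* Hermitian case: q = #|F| = p ^ h with h even, sqrt q = p ^ (h / 2) *)
  (forall p h : nat, prime p -> ~~ odd h -> #|F| = (p ^ h)%N ->
    LCD (@ipH F (p ^ h./2) _) (code_of G1) -> LCD (@ipH F (p ^ h./2) _) (code_of G2) ->
    forall s : nat, (0 < s)%N ->
    exists G : 'M[F]_(2 * s * n, 4 * s * n),
      [/\ \rank G = (2 * s * n)%N, min_dist (code_of G) (minn d1 d2),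
          formally_self_dual (@ipH F (p ^ h./2) _) (code_of G)
        & LCD (@ipH F (p ^ h./2) _) (code_of G)])).
Proof.
move=> _ tA1 tA2 G1 G2 md1 md2; split.
  exact: (@fsd_LCD_toeplitz_sum F id (fun _ => erefl) erefl n f1 f2 A1 A2
                                d1 d2 tA1 tA2 md1 md2).
move=> p h _ h_even cardF.
have sqrt_card : (p ^ h./2 * p ^ h./2)%N = #|F|.
  by rewrite -expnD addnn cardF -[in RHS](odd_double_half h) (negbTE h_even).
exact: (@fsd_LCD_toeplitz_sum F _ (expr_sqrt_card_involutive sqrt_card)
          (expr_sqrt_card0 sqrt_card) n f1 f2 A1 A2 d1 d2 tA1 tA2 md1 md2).
Qed.
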